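(* For every $N\ge2$ and all masses $m_1,\dots,m_N>0$, $$C(\mathbf m)\ \ge\ C_L(\mathbf m):=\gamma\Big(\sum_{i<j}m_im_j\Big)^{3/2}\Big(\sum_i m_i\Big)^{-1/2}.$$
   Context: Fix $\gamma>0$. Planar configuration space $\mathfrak R=\{\mathbf r=(\mathbf r_1,\dots,\mathbf r_N)\in(\mathbb R^2)^N:\ \mathbf r_i\neq\mathbf r_j \text{ for } i\neq j\}$; $f(\mathbf r)=\sum_{i<j}\frac{\gamma m_im_j}{|\mathbf r_j-\mathbf r_i|}$, $g(\mathbf r)=\sum_i m_i|\mathbf r_i|^2$; $C(\mathbf m)=\min\{f(\mathbf r):\mathbf r\in\mathfrak R,\ g(\mathbf r)=1\}$, where $\mathbf m=(m_1,\dots,m_N)$. *)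

From HB Require Import structures.
From mathcomp Require Import all_boot all_order all_algebra.
From mathcomp Require Import all_classical all_reals all_analysis.
Set Implicit Arguments. Unset Strict Implicit. Unset Printing Implicit Defensive.
Import Order.TTheory GRing.Theory Num.Theory.
Local Open Scope classical_set_scope.
Local Open Scope ring_scope.

Section Defs.
Variable R : realType.

Definition pnorm (p : R * R) : R := Num.sqrt (p.1 ^+ 2 + p.2 ^+ 2).
Definition pdist (p q : R * R) : R := pnorm (q.1 - p.1, q.2 - p.2).

Definition config_space {N : nat} : set ('I_N -> R * R) :=
  [set r | forall i j : 'I_N, i != j -> r i <> r j].

Definition fpot (gamma : R) (N : nat) (m : 'I_N -> R) (r : 'I_N -> R * R) : R :=
  \sum_(i < N) \sum_(j < N | (i < j)%N) gamma * m i * m j / pdist (r i) (r j).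

Definition gmom (N : nat) (m : 'I_N -> R) (r : 'I_N -> R * R) : R :=
  \sum_(i < N) m i * pnorm (r i) ^+ 2.

(* C(m) = min { f(r) : r in config space, g(r) = 1 } (as an infimum) *)
Definition Cmin (gamma : R) (N : nat) (m : 'I_N -> R) : R :=
  inf [set fpot gamma m r | r in [set r : 'I_N -> R * R | config_space r /\ gmom m r = 1]].

Definition CL (gamma : R) (N : nat) (m : 'I_N -> R) : R :=
  gamma * ((\sum_(i < N) \sum_(j < N | (i < j)%N) m i * m j) `^ (3 / 2))
        * ((\sum_(i < N) m i) `^ (- (1 / 2))).

End Defs.

(* Tangent-line argument.  Since [1/d] is convex in [d^2], for every [t > 0]
   we have [1/d >= 3/(2t) - d^2/(2t^3)], with equality at [d = t].  Summing over
   pairs gives [f(r) >= gamma (3S/(2t) - D/(2t^3))] with [S = sum_{i<j} m_i m_j]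
   and [D = sum_{i<j} m_i m_j |r_i - r_j|^2].  Lagrange's identity gives
   [D = M g(r) - |sum_i m_i r_i|^2 <= M] on [g = 1], where [M = sum_i m_i];
   the choice [t^2 = M/S] then yields [f(r) >= gamma S/t = C_L(m)]. *)
From HB Require Import structures.
From mathcomp Require Import all_boot all_order all_algebra.
From mathcomp Require Import all_classical all_reals all_analysis.
From mathcomp Require Import ring lra.
Import Order.TTheory GRing.Theory Num.Theory.
Local Open Scope ring_scope.

Lemma sumr_ltn_sym (V : nmodType) (n : nat) (F : 'I_n -> 'I_n -> V) :
  (forall i j, F i j = F j i) -> (forall i, F i i = 0) ->
  \sum_i \sum_j F i j = (\sum_(i < n) \sum_(j < n | (i < j)%N) F i j) *+ 2.
Proof.
move=> Fsym Fdiag.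
have split_row (i : 'I_n) : \sum_j F i j =
    \sum_(j < n | (i < j)%N) F i j + \sum_(j < n | (j < i)%N) F i j.
  rewrite (bigID (fun j : 'I_n => (i < j)%N)) /=; congr (_ + _).
  rewrite (bigID (fun j : 'I_n => (j < i)%N)) /= [X in _ + X]big1 ?addr0.
    by apply: eq_bigl => j; case: ltngtP.
  move=> j /andP[]; rewrite -!leqNgt => ji ij.
  by rewrite (_ : j = i) ?Fdiag //; apply/val_inj/eqP; rewrite eqn_leq ij ji.
under eq_bigr do rewrite split_row.
rewrite big_split /= mulr2n; congr (_ + _).
rewrite (exchange_big_dep xpredT) //=; apply: eq_bigr => i _.
by apply: eq_bigr => j _; apply: Fsym.
Qed.

Lemma lagrange_identity (R : numDomainType) (n : nat) (m x : 'I_n -> R) :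
  \sum_(i < n) \sum_(j < n | (i < j)%N) m i * m j * (x j - x i) ^+ 2 =
  (\sum_i m i) * (\sum_i m i * x i ^+ 2) - (\sum_i m i * x i) ^+ 2.
Proof.
apply: (@pmulrnI _ 2) => //; cbv beta; rewrite -sumr_ltn_sym; last 2 first.
- by move=> i j; ring.
- by move=> i; rewrite subrr expr0n mulr0.
have -> : \sum_i \sum_j m i * m j * (x j - x i) ^+ 2 =
    \sum_i \sum_j (m i * (m j * x j ^+ 2) + m i * x i ^+ 2 * m j
                   - (m i * x i * (m j * x j)) *+ 2).
  by apply: eq_bigr => i _; apply: eq_bigr => j _; ring.
under eq_bigr => i _ do rewrite big_split big_split /= sumrN sumrMnl.
rewrite big_split big_split /= sumrN sumrMnl expr2 -!big_distrlr /=.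
by rewrite !mulr2n; ring.
Qed.

Lemma psumr_gt0 {R : numDomainType} {I : finType} {P : pred I} {F : I -> R}
    (i0 : I) :
  (forall i, P i -> 0 <= F i) -> P i0 -> 0 < F i0 -> 0 < \sum_(i | P i) F i.
Proof.
move=> F_ge0 P_i0 F_i0_gt0; rewrite lt_def psumr_neq0 // sumr_ge0 // andbT.
by apply/hasP; exists i0; rewrite ?mem_index_enum ?P_i0.
Qed.

Lemma inv_ge_tangent (R : realFieldType) (d t : R) : 0 < d -> 0 < t ->
  3 / (2 * t) - d ^+ 2 / (2 * t ^+ 3) <= d^-1.
Proof.
move=> d_gt0 t_gt0; rewrite -subr_ge0.
have -> : d^-1 - (3 / (2 * t) - d ^+ 2 / (2 * t ^+ 3)) =
    (d - t) ^+ 2 * (d + 2 * t) / (2 * d * t ^+ 3).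
  by field; rewrite ?mulf_neq0 ?expf_neq0 ?gt_eqF.
have [d_ge0 t_ge0] := (ltW d_gt0, ltW t_gt0).
apply: divr_ge0; first by rewrite mulr_ge0 ?sqr_ge0 ?addr_ge0 ?mulr_ge0.
by rewrite !mulr_ge0 ?exprn_ge0.
Qed.

Section PlanarNBody.
Context {R : realType}.
Implicit Types (p q : R * R) (gamma : R) (N : nat).

Definition total_mass {N} (m : 'I_N -> R) : R := \sum_i m i.

Definition pair_mass {N} (m : 'I_N -> R) : R :=
  \sum_(i < N) \sum_(j < N | (i < j)%N) m i * m j.

Definition pair_moment {N} (m : 'I_N -> R) (r : 'I_N -> R * R) : R :=
  \sum_(i < N) \sum_(j < N | (i < j)%N) m i * m j * pdist (r i) (r j) ^+ 2.

Lemma pnorm_sqr p : pnorm p ^+ 2 = p.1 ^+ 2 + p.2 ^+ 2.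
Proof. by rewrite sqr_sqrtr // addr_ge0 ?sqr_ge0. Qed.

Lemma pdist_sqr p q : pdist p q ^+ 2 = (q.1 - p.1) ^+ 2 + (q.2 - p.2) ^+ 2.
Proof. exact: pnorm_sqr. Qed.

Lemma pdist_gt0 p q : p <> q -> 0 < pdist p q.
Proof.
move=> /eqP pq; rewrite sqrtr_gt0 lt_def addr_ge0 ?sqr_ge0 // andbT.
rewrite paddr_eq0 ?sqr_ge0 // !sqrf_eq0 !subr_eq0.
by apply: contra pq; case: p q => [a b] [c d] /= /andP[/eqP-> /eqP->].
Qed.

Lemma total_mass_gt0 {N} (m : 'I_N -> R) :
  (0 < N)%N -> (forall i, 0 < m i) -> 0 < total_mass m.
Proof.
move=> N_gt0 m_gt0.
by apply: (psumr_gt0 (Ordinal N_gt0)) => // i _; apply: ltW.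
Qed.

Lemma pair_mass_gt0 {N} (m : 'I_N -> R) :
  (2 <= N)%N -> (forall i, 0 < m i) -> 0 < pair_mass m.
Proof.
move=> N_ge2 m_gt0; have m_ge0 i : 0 <= m i by exact: ltW.
apply: (psumr_gt0 (Ordinal (ltnW N_ge2))) => // [i _|].
  by apply: sumr_ge0 => j _; rewrite mulr_ge0.
apply: (psumr_gt0 (Ordinal N_ge2)) => // [j _|]; first by rewrite mulr_ge0.
by rewrite mulr_gt0.
Qed.

Lemma pair_moment_le {N} (m : 'I_N -> R) (r : 'I_N -> R * R) :
  pair_moment m r <= total_mass m * gmom m r.
Proof.
pose x i := (r i).1; pose y i := (r i).2.
have -> : pair_moment m r =
    \sum_(i < N) \sum_(j < N | (i < j)%N) m i * m j * (x j - x i) ^+ 2 +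
    \sum_(i < N) \sum_(j < N | (i < j)%N) m i * m j * (y j - y i) ^+ 2.
  rewrite -big_split; apply: eq_bigr => i _.
  by rewrite -big_split; apply: eq_bigr => j _; rewrite pdist_sqr mulrDr.
have -> : gmom m r = \sum_i m i * x i ^+ 2 + \sum_i m i * y i ^+ 2.
  by rewrite -big_split; apply: eq_bigr => i _; rewrite pnorm_sqr mulrDr.
by rewrite !lagrange_identity -/(total_mass m) mulrDr lerD // gerBl sqr_ge0.
Qed.

Lemma fpot_ge_tangent gamma {N} (m : 'I_N -> R) (r : 'I_N -> R * R) (t : R) :
  0 <= gamma -> (forall i, 0 <= m i) -> config_space r -> 0 < t ->
  gamma * (3 / (2 * t) * pair_mass m - pair_moment m r / (2 * t ^+ 3))
    <= fpot gamma m r.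
Proof.
move=> gamma_ge0 m_ge0 r_conf t_gt0.
rewrite /pair_mass /pair_moment mulr_sumr mulr_suml -sumrB mulr_sumr.
apply: ler_sum => i _; rewrite mulr_sumr mulr_suml -sumrB mulr_sumr.
apply: ler_sum => j ij.
have d_gt0 : 0 < pdist (r i) (r j).
  by apply/pdist_gt0/r_conf; rewrite neq_ltn ij.
have -> : gamma * (3 / (2 * t) * (m i * m j)
    - m i * m j * pdist (r i) (r j) ^+ 2 / (2 * t ^+ 3)) =
  gamma * m i * m j * (3 / (2 * t) - pdist (r i) (r j) ^+ 2 / (2 * t ^+ 3)).
  by ring.
by rewrite ler_wpM2l ?mulr_ge0 ?inv_ge_tangent.
Qed.

Lemma CL_eq_div gamma {N} (m : 'I_N -> R) :
  0 < pair_mass m -> 0 < total_mass m ->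
  CL gamma m = gamma * pair_mass m
                 / (Num.sqrt (total_mass m) / Num.sqrt (pair_mass m)).
Proof.
rewrite /CL -/(pair_mass m) -/(total_mass m).
move: (pair_mass m) (total_mass m) => S M S_gt0 M_gt0.
have -> : (3 / 2 : R) = 1 + 2^-1 by field.
rewrite powRD ?gt_eqF ?implybT // powRr1 ?ltW // powR12_sqrt ?ltW //.
rewrite powRN div1r powR12_sqrt ?ltW //.
by field; rewrite !gt_eqF ?sqrtr_gt0.
Qed.

Lemma CL_le_fpot gamma {N} (m : 'I_N -> R) (r : 'I_N -> R * R) :
  0 <= gamma -> (forall i, 0 <= m i) -> 0 < pair_mass m -> 0 < total_mass m ->
  config_space r -> gmom m r = 1 -> CL gamma m <= fpot gamma m r.
Proof.
move=> gamma_ge0 m_ge0 S_gt0 M_gt0 r_conf r_norm.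
rewrite CL_eq_div //.
set S := pair_mass m in S_gt0 *; set M := total_mass m in M_gt0 *.
set t := Num.sqrt M / Num.sqrt S.
have t_gt0 : 0 < t by rewrite divr_gt0 ?sqrtr_gt0.
have M_eq : M = t ^+ 2 * S.
  by rewrite expr_div_n !sqr_sqrtr ?ltW // divfK ?gt_eqF.
apply: le_trans (fpot_ge_tangent gamma m r t gamma_ge0 m_ge0 r_conf t_gt0).
have D_le : pair_moment m r <= t ^+ 2 * S.
  by rewrite -M_eq -[M]mulr1 -r_norm pair_moment_le.
have -> : gamma * S / t = gamma * (3 / (2 * t) * S - t ^+ 2 * S / (2 * t ^+ 3)).
  by field; rewrite gt_eqF.
by rewrite ler_wpM2l // lerB // ler_pM2r // invr_gt0 mulr_gt0 // exprn_gt0.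
Qed.

Lemma exists_config_gmom1 {N} (m : 'I_N -> R) :
  (0 < N)%N -> (forall i, 0 < m i) ->
  exists r : 'I_N -> R * R, config_space r /\ gmom m r = 1.
Proof.
move=> N_gt0 m_gt0.
pose Q := \sum_(i < N) m i * i.+1%:R ^+ 2.
have Q_gt0 : 0 < Q.
  apply: (psumr_gt0 (Ordinal N_gt0)) => [i _| |] //.
    by rewrite mulr_ge0 ?sqr_ge0 ?ltW.
  by rewrite mulr_gt0 ?exprn_gt0.
pose c := (Num.sqrt Q)^-1.
have c_gt0 : 0 < c by rewrite invr_gt0 sqrtr_gt0.
exists (fun i => (c * i.+1%:R, 0)); split.
  move=> i j /eqP ij [] /(mulfI (lt0r_neq0 c_gt0)) /eqP.
  by rewrite eqr_nat eqSS => /eqP/val_inj.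
have -> : gmom m (fun i => (c * i.+1%:R, 0)) = c ^+ 2 * Q.
  rewrite /gmom /Q mulr_sumr; apply: eq_bigr => i _.
  by rewrite pnorm_sqr /= expr0n addr0 exprMn; ring.
by rewrite exprVn sqr_sqrtr ?ltW // mulVf ?gt_eqF.
Qed.

End PlanarNBody.

Theorem mainTheorem6 (R : realType) (gamma : R) (N : nat) (m : 'I_N -> R) :
  0 < gamma -> (2 <= N)%N -> (forall i, 0 < m i) ->
  CL gamma m <= Cmin gamma m.
Proof.
move=> gamma_gt0 N_ge2 m_gt0.
have N_gt0 : (0 < N)%N by exact: ltnW.
apply: lb_le_inf.
  have [r r_feasible] := exists_config_gmom1 m N_gt0 m_gt0.
  by exists (fpot gamma m r), r.
move=> _ [r [r_conf r_norm] <-].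
apply: CL_le_fpot => //.
- exact: ltW.
- by move=> i; exact: ltW.
- exact: pair_mass_gt0.
- exact: total_mass_gt0.
Qed.
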